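(* Consider a run of RLS-GP on the target $\mathrm{AND}_n$ with $F = \{\mathrm{AND}, \mathrm{OR}\}$, $L = \{x_1, \ldots, x_n\}$, a tree size limit $\ell \ge n$, and the complete truth table as fitness. Let $T$ be the number of iterations before the optimum is found, and let $T_0 \le T$ be the number of these iterations in which the parent (current) tree is not full, i.e. has fewer than $\ell$ leaves. Then $E[T_0] = O(\ell\, n \log^2 n)$.
   Context: Programs are finite rooted binary trees (the empty tree is allowed) whose internal nodes are labelled by binary Boolean functions from $F$ and whose leaves are labelled by literals from $L$; a program computes a Boolean function of $(x_1,\dots,x_n)$ in the obvious way. $\mathrm{AND}_n(x) = x_1 \wedge \dots \wedge x_n$. The fitness (to be minimised) of a program $X$ is $f(X) = |\{x \in \{0,1\}^n : X(x) \ne \mathrm{AND}_n(x)\}|$; the optimum is a tree of fitness $0$. LeafCount$(X)$ is the number of leaves of $X$. HVL-Prime with subtree deletion, applied to a tree $X$: choose $op \in \{\mathrm{INS}, \mathrm{DEL}, \mathrm{SUB}\}$, a literal $l \in L$ and a function $g \in F$, independently and uniformly at random. If $X$ is empty, the result is the single leaf $l$. Otherwise: if $op = \mathrm{INS}$, choose a node $x$ of $X$ uniformly at random and replace it by a new node labelled $g$ whose two children are the subtree rooted at $x$ and a new leaf $l$, in uniformly random order; if $op = \mathrm{DEL}$, choose a node $x$ of $X$ (leaf or internal) uniformly at random and replace the parent of $x$ by the sibling of $x$; if $op = \mathrm{SUB}$, choose a leaf of $X$ uniformly at random and replace it by $l$. RLS-GP with tree size limit $\ell$: start with the empty tree $X$;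 in each iteration let $X' := $ HVL-Prime$(X)$, and if LeafCount$(X') \le \ell$ and $f(X') \le f(X)$ then set $X := X'$. Asymptotics are as $n \to \infty$. *)

From HB Require Import structures.
From mathcomp Require Import all_boot all_order all_algebra.
From mathcomp Require Import reals exp.
Set Implicit Arguments. Unset Strict Implicit. Unset Printing Implicit Defensive.
Import Order.TTheory GRing.Theory Num.Theory.

(* Non-empty trees over F = {AND, OR} (true = AND, false = OR) and
   L = {x_1, ..., x_n} (leaf label i : 'I_n stands for x_(i+1)).
   A program is an [option (tree n)], [None] being the empty tree. *)
Inductive tree (n : nat) : Type :=
| Leaf of 'I_n
| Node of bool & tree n & tree n.
Arguments Leaf {n}.
Arguments Node {n}.

Definition prog (n : nat) := option (tree n).

Section Trees.
Variable n : nat.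

Fixpoint tsize (t : tree n) : nat :=
  match t with Leaf _ => 1 | Node _ a b => (tsize a + tsize b).+1 end.

Fixpoint tleaves (t : tree n) : nat :=
  match t with Leaf _ => 1 | Node _ a b => tleaves a + tleaves b end.

Definition LeafCount (X : prog n) : nat :=
  if X is Some t then tleaves t else 0.

Fixpoint teval (t : tree n) (x : {ffun 'I_n -> bool}) : bool :=
  match t with
  | Leaf i => x i
  | Node g a b => if g then teval a x && teval b x else teval a x || teval b x
  end.

Definition ANDn (x : {ffun 'I_n -> bool}) : bool := [forall i, x i].

(* Fitness: number of misclassified inputs.  Convention: the empty tree
   computes nothing and gets the worst possible fitness 2^n. *)
Definition fitness (X : prog n) : nat :=
  if X is Some t then #|[set x : {ffun 'I_n -> bool} | teval t x != ANDn x]|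
  else 2 ^ n.

(* Nodes are numbered 0 .. tsize t - 1 in preorder.
   [modify_at f t k] replaces the subtree rooted at node k by its image by f. *)
Fixpoint modify_at (f : tree n -> tree n) (t : tree n) (k : nat) : tree n :=
  if k is 0 then f t else
  match t with
  | Leaf _ => t
  | Node g a b =>
      if k.-1 < tsize a then Node g (modify_at f a k.-1) b
      else Node g a (modify_at f b (k.-1 - tsize a))
  end.

Definition ins (t : tree n) (k : nat) (g : bool) (l : 'I_n) (side : bool) :=
  modify_at (fun s => if side then Node g s (Leaf l) else Node g (Leaf l) s) t k.

(* DEL of the non-root node k (k >= 1): the parent of node k is replaced by
   the sibling of node k. *)
Fixpoint del_nonroot (t : tree n) (k : nat) : tree n :=
  match t with
  | Leaf _ => t
  | Node g a b =>
      if k == 1 then b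
      else if k == (tsize a).+1 then a
      else if k <= tsize a then Node g (del_nonroot a k.-1) b
      else Node g a (del_nonroot b (k - (tsize a).+1))
  end.

(* DEL of the root (which has no parent) yields the empty tree. *)
Definition del (t : tree n) (k : nat) : prog n :=
  if k is 0 then None else Some (del_nonroot t k).

(* Leaves are numbered 0 .. tleaves t - 1 from left to right;
   SUB replaces leaf j by literal l. *)
Fixpoint sub_leaf (t : tree n) (j : nat) (l : 'I_n) : tree n :=
  match t with
  | Leaf _ => Leaf l
  | Node g a b =>
      if j < tleaves a then Node g (sub_leaf a j l) b
      else Node g a (sub_leaf b (j - tleaves a) l)
  end.

End Trees.

Section Dist.
Variable R : realType.
Local Open Scope ring_scope.

(* Finitely supported distributions as weighted lists of outcomes. *)
Definition dist (T : Type) := seq (R * T).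

Definition dbind (A B : Type) (d : dist A) (k : A -> dist B) : dist B :=
  flatten [seq [seq (pa.1 * pb.1, pb.2) | pb <- k pa.2] | pa <- d].

Definition unif (T : Type) (s : seq T) : dist T :=
  [seq ((size s)%:R^-1, x) | x <- s].

Inductive hvl_op := INS | DEL | SUB.

Variable n : nat.

(* One application of HVL-Prime (with subtree deletion) to X. *)
Definition hvl (X : prog n) : dist (prog n) :=
  dbind (unif [:: INS; DEL; SUB]) (fun op =>
  dbind (unif (enum 'I_n)) (fun l =>
  dbind (unif [:: true; false]) (fun g =>
  match X with
  | None => [:: (1, Some (Leaf l))]
  | Some t =>
      match op with
      | INS => dbind (unif (iota 0 (tsize t))) (fun k =>
               dbind (unif [:: true; false]) (fun side =>
               [:: (1, Some (ins t k g l side))]))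
      | DEL => dbind (unif (iota 0 (tsize t))) (fun k => [:: (1, del t k)])
      | SUB => dbind (unif (iota 0 (tleaves t))) (fun j =>
               [:: (1, Some (sub_leaf t j l))])
      end
  end))).

Definition rls_step (ell : nat) (X : prog n) : dist (prog n) :=
  [seq (pX'.1, if (LeafCount pX'.2 <= ell)%N && (fitness pX'.2 <= fitness X)%N
               then pX'.2 else X) | pX' <- hvl X].

Fixpoint rls_dist (ell t : nat) : dist (prog n) :=
  if t is t'.+1 then dbind (rls_dist ell t') (rls_step ell) else [:: (1, None)].

Definition p_notfull_nonopt (ell t : nat) : R :=
  \sum_(pX <- rls_dist ell t |
          (fitness pX.2 != 0)%N && (LeafCount pX.2 < ell)%N) pX.1.

(* E[T_0] = sum over t >= 0 of p_notfull_nonopt ell t (a series of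
   nonnegative terms); its partial sums: *)
Definition ET0_partial (ell t : nat) : R :=
  \sum_(s < t) p_notfull_nonopt ell s.

End Dist.

From Pilot Require Import Defs.
From HB Require Import structures.
From mathcomp Require Import all_boot all_order all_algebra.
From mathcomp Require Import reals exp.
From mathcomp Require Import ring lra zify.
Import Order.TTheory GRing.Theory Num.Theory.
Local Open Scope ring_scope.
Set Implicit Arguments. Unset Strict Implicit. Unset Printing Implicit Defensive.

(* Drift analysis of the set U of inputs on which the current tree outputs 1:
   |U| = fitness + 1, and U always contains the all-ones input.  While the
   tree is not full, inserting AND(., x_l) at the root is always accepted, has
   probability 1/(12 n size) >= 1/(24 n ell), and shrinks U to U /\ {x_l = 1};
   summed over l, this removes Z(U), the total number of zeros of the inputs
   in U.  As there are at most n^r inputs with fewer than r zeros,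
   Z(U) >= |U| lam(|U|) / (4 ln n), where lam(s) = 1 for s <= n^4 and ln s
   beyond.  Hence the potential 96 n ell ln n * psi(|U|), with
   psi' = 1 / (s lam(s)), never increases and drops by at least 1 in
   expectation in every non-full, non-optimal step.  Being nonnegative, it
   bounds E[T_0] by its initial value, which is O(ell n log^2 n) because
   psi(2^n) <= 5 ln n. *)

(* [tuple.tsize] would shadow the node count of [Defs]. *)
Local Notation tsize := Defs.tsize.

Section Expectation.
Variable R : realType.

Definition dexp (T : Type) (d : dist R T) (F : T -> R) : R :=
  \sum_(p <- d) p.1 * F p.2.

Definition dnonneg (T : Type) (d : dist R T) : bool := all (fun p => 0 <= p.1) d.

Lemma dexp_bind (A B : Type) (d : dist R A) (k : A -> dist R B) F :
  dexp (dbind d k) F = \sum_(p <- d) p.1 * dexp (k p.2) F.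
Proof.
rewrite /dexp /dbind big_flatten big_map; apply: eq_bigr => p _.
by rewrite big_map big_distrr; apply: eq_bigr => q _ /=; rewrite mulrA.
Qed.

Lemma dexp_bind_unif (A B : Type) (s : seq A) (k : A -> dist R B) F :
  dexp (dbind (unif R s) k) F = \sum_(x <- s) (size s)%:R^-1 * dexp (k x) F.
Proof. by rewrite dexp_bind /unif big_map. Qed.

Lemma dexp_ret (A : Type) (x : A) F : dexp [:: (1, x)] F = F x.
Proof. by rewrite /dexp big_seq1 mul1r. Qed.

Lemma dexpB (A : Type) (d : dist R A) F G :
  dexp d (fun x => F x - G x) = dexp d F - dexp d G.
Proof. by rewrite /dexp -sumrB; apply: eq_bigr => p _; rewrite mulrBr. Qed.

Lemma dnonneg_bind (A B : Type) (d : dist R A) (k : A -> dist R B) :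
  dnonneg d -> (forall x, dnonneg (k x)) -> dnonneg (dbind d k).
Proof.
move=> hd hk; elim: d hd => [|p d IH] //= /andP[hp hd].
rewrite /dnonneg /dbind /= all_cat; apply/andP; split; last exact: IH.
elim: (k p.2) (hk p.2) => //= q s IHs /andP[hq hs].
by rewrite mulr_ge0 ?IHs.
Qed.

Lemma dnonneg_unif (A : Type) (s : seq A) : dnonneg (unif R s).
Proof.
by rewrite /dnonneg /unif; move: (size s) => m; elim: s => //= x s ->; rewrite invr_ge0 andbT.
Qed.

Lemma dnonneg_ret (A : Type) (x : A) : dnonneg [:: ((1 : R), x)].
Proof. by rewrite /dnonneg /= ler01. Qed.

Lemma ler_dexp (A : Type) (d : dist R A) F G :
  dnonneg d -> (forall x, F x <= G x) -> dexp d F <= dexp d G.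
Proof.
move=> + hFG; rewrite /dexp; elim: d => [|p d IH] /=; first by rewrite !big_nil.
by move=> /andP[hp hd]; rewrite !big_cons lerD ?IH ?ler_wpM2l.
Qed.

Lemma dexp_ge0 (A : Type) (d : dist R A) F :
  dnonneg d -> (forall x, 0 <= F x) -> 0 <= dexp d F.
Proof.
move=> hd hF; apply: le_trans (ler_dexp hd hF).
by rewrite /dexp big1 // => p _; rewrite mulr0.
Qed.

Lemma sum_unif_const (A : Type) (s : seq A) (c : R) :
  (0 < size s)%N -> \sum_(x <- s) (size s)%:R^-1 * c = c.
Proof.
move=> hs; rewrite big_const_seq count_predT iter_addr_0 -mulrnAl.
by rewrite -mulr_natr mulVf ?mul1r // pnatr_eq0 -lt0n.
Qed.

Lemma dexp_bind_unif_const (A B : Type) (s : seq A) (k : A -> dist R B) F c :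
  (0 < size s)%N -> (forall x, dexp (k x) F = c) -> dexp (dbind (unif R s) k) F = c.
Proof.
by move=> hs h; rewrite dexp_bind_unif -[RHS](sum_unif_const c hs); under eq_bigr do rewrite h.
Qed.

Lemma ler_dexp_bind_unif (A B : Type) (s : seq A) (k : A -> dist R B) F c :
  (0 < size s)%N -> (forall x, c <= dexp (k x) F) -> c <= dexp (dbind (unif R s) k) F.
Proof.
move=> hs h; rewrite dexp_bind_unif -[leLHS](sum_unif_const c hs).
by apply: ler_sum => x _; rewrite ler_wpM2l ?invr_ge0.
Qed.

Lemma ler_dexp_bind_unif_at (A B : Type) (s : seq A) (k : A -> dist R B) F x c :
  List.In x s -> (forall y, dnonneg (k y)) -> (forall o, 0 <= F o) ->
  c <= dexp (k x) F -> (size s)%:R^-1 * c <= dexp (dbind (unif R s) k) F.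
Proof.
move=> xs hk hF hc; rewrite dexp_bind_unif.
have w_ge0 : 0 <= (size s)%:R^-1 :> R by rewrite invr_ge0.
move: (size s)%:R^-1 w_ge0 => w w_ge0.
apply: le_trans (_ : w * dexp (k x) F <= _); first by rewrite ler_wpM2l.
elim: s xs => [|y s IH] //=; rewrite big_cons => -[-> | xs].
  by rewrite lerDl sumr_ge0 // => z _; rewrite mulr_ge0 ?dexp_ge0.
by rewrite (le_trans (IH xs)) // lerDr mulr_ge0 ?dexp_ge0.
Qed.

End Expectation.

Section TruthSets.
Variable n : nat.
Local Notation input := {ffun 'I_n -> bool}.
Local Open Scope nat_scope.

Definition truth_set (t : tree n) : {set input} := [set x | teval t x].

Definition all_true : input := [ffun => true].

Lemma ANDnE x : ANDn x = (x == all_true).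
Proof.
apply/forallP/eqP => [h|-> i]; last by rewrite ffunE.
by apply/ffunP => i; rewrite ffunE h.
Qed.

Lemma teval_all_true (t : tree n) : teval t all_true.
Proof. by elim: t => [i|[] a IHa b IHb] /=; rewrite ?ffunE ?IHa ?IHb. Qed.

Lemma card_truth_set (t : tree n) : #|truth_set t| = (fitness (Some t)).+1.
Proof.
rewrite /fitness /truth_set [in LHS](cardsD1 all_true) inE teval_all_true add1n.
congr _.+1; apply: eq_card => x; rewrite !inE ANDnE.
by case: eqP => [->|_]; rewrite ?teval_all_true //; case: (teval t x).
Qed.

Lemma fitness_lt (t : tree n) : fitness (Some t) < 2 ^ n.
Proof.
by rewrite -ltnS -card_truth_set ltnS (leq_trans (max_card _)) // card_ffun card_bool card_ord.
Qed.

Lemma truth_set_and_leaf (t : tree n) (l : 'I_n) :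
  truth_set (Node true t (Leaf l)) = truth_set t :&: [set x : input | x l].
Proof. by apply/setP => x; rewrite !inE. Qed.

Lemma tsize_tleaves (t : tree n) : (tsize t).+1 = 2 * tleaves t.
Proof. by elim: t => [i|g a IHa b IHb] //=; lia. Qed.

Lemma tsize_gt0 (t : tree n) : 0 < tsize t.
Proof. by case: t. Qed.

Lemma tleaves_gt0 (t : tree n) : 0 < tleaves t.
Proof. by elim: t => [i|g a IHa b IHb] //=; lia. Qed.

Definition zeros (x : input) : nat := #|[set i | ~~ x i]|.

Definition zeros_sum (S : {set input}) : nat := \sum_(x in S) zeros x.

Lemma zeros_sumE (S : {set input}) :
  zeros_sum S = \sum_(l < n) #|S :\: [set x : input | x l]|.
Proof.
have zerosE x : zeros x = \sum_(l < n) ~~ x l.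
  by rewrite /zeros -sum1_card big_mkcond; apply: eq_bigr => l _; rewrite inE; case: (x l).
rewrite /zeros_sum (eq_bigr _ (fun x _ => zerosE x)) exchange_big; apply: eq_bigr => l _.
rewrite -sum1_card big_mkcond [RHS]big_mkcond; apply: eq_bigr => x _ /=.
by rewrite !inE; case: (x \in S); case: (x l).
Qed.

Lemma card_few_zeros r : #|[set x : input | zeros x < r]| <= \sum_(j < r) 'C(n, j).
Proof.
pose zero_set (x : input) := [set i | ~~ x i].
have zero_set_inj : injective zero_set.
  move=> x y /setP e; apply/ffunP => i; have := e i.
  by rewrite !inE; case: (x i); case: (y i).
rewrite -(card_imset [set x : input | zeros x < r] zero_set_inj).
apply: leq_trans (_ : #|[set A : {set 'I_n} | #|A| < r]| <= _).
  by apply/subset_leq_card/subsetP => A /imsetP[x]; rewrite !inE => hx ->.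
elim: r => [|r IH].
  by rewrite big_ord0 leqn0 cards_eq0; apply/eqP/setP => A; rewrite !inE.
have -> : [set A : {set 'I_n} | #|A| < r.+1] =
          [set A : {set 'I_n} | #|A| < r] :|: [set A : {set 'I_n} | #|A| == r].
  by apply/setP => A; rewrite !inE ltnS leq_eqVlt orbC.
rewrite big_ord_recr /= (leq_trans (leq_card_setU _ _)) //.
by rewrite card_draws card_ord leq_add2r.
Qed.

Lemma bin_leq_expn m j : 'C(m, j) <= m ^ j.
Proof.
apply: leq_trans (_ : m ^_ j <= _); first by rewrite -bin_ffact leq_pmulr ?fact_gt0.
by elim: j => [|j IH] //; rewrite ffactnSr expnSr leq_mul // leq_subr.
Qed.

Lemma sum_bin_leq_expn r : 1 < n -> \sum_(j < r) 'C(n, j) <= n ^ r.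
Proof.
move=> n_gt1; elim: r => [|r IH]; first by rewrite big_ord0.
rewrite big_ord_recr /= expnSr (leq_trans (leq_add IH (bin_leq_expn n r))) //.
by rewrite addnn -mul2n mulnC leq_mul2l n_gt1 orbT.
Qed.

Lemma zeros_sum_ge (S : {set input}) r :
  r * (#|S| - #|[set x : input | zeros x < r]|) <= zeros_sum S.
Proof.
set few := [set x : input | zeros x < r].
have hS : #|S| - #|few| <= #|S :\: few|.
  by rewrite -(cardsID few S) leq_subLR leq_add2r subset_leq_card // subsetIr.
rewrite (leq_trans (leq_mul (leqnn r) hS)) //.
rewrite mulnC -sum_nat_const /zeros_sum big_mkcond [X in _ <= X]big_mkcond /=.
by apply: leq_sum => x _; rewrite !inE; case: (x \in S); case: ltnP; rewrite ?andbF.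
Qed.

Lemma card_leq_zeros_sum (S : {set input}) : #|S| <= (zeros_sum S).+1.
Proof.
have := zeros_sum_ge S 1; have := card_few_zeros 1.
by rewrite big_ord1 bin0; lia.
Qed.

Lemma card_mul_leq_zeros_sum (S : {set input}) r :
  1 < n -> 2 * n ^ r <= #|S| -> r * #|S| <= 2 * zeros_sum S.
Proof.
move=> n_gt1 hS; have := zeros_sum_ge S r.
have := leq_trans (card_few_zeros r) (sum_bin_leq_expn r n_gt1); nia.
Qed.

End TruthSets.

Section VariableDriftPotential.
Variable R : realType.

Lemma sub_le_mul_lnB (a b : R) : 0 < a -> 0 < b -> a - b <= a * (ln a - ln b).
Proof.
move=> a_gt0 b_gt0; have ba_gt0 : 0 < b / a by rewrite divr_gt0.
have : ln (b / a) <= b / a - 1.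
  by have := @le_ln1Dx R (b / a - 1); rewrite addrCA subrr addr0; apply; lra.
rewrite ln_div ?posrE // => /(ler_wpM2l (ltW a_gt0)).
by rewrite !mulrBr mulr1 mulrCA divff ?gt_eqF // mulr1; lra.
Qed.

Lemma ln2_ge_half : 1 / 2 <= ln (2 : R).
Proof. by have := @sub_le_mul_lnB 2 1 ltac:(lra) ltac:(lra); rewrite ln1 subr0; lra. Qed.

Lemma ln2_le1 : ln (2 : R) <= 1.
Proof. by have := @le_ln1Dx R 1 ltac:(lra). Qed.

Lemma ln_ge1_gt1 (x : R) : 1 <= ln x -> 1 < x.
Proof. by move=> h; rewrite ltNge; apply/negP => /ln_le0; lra. Qed.

Lemma sub_le_mul_lnlnB (a b : R) : 1 < b -> b <= a ->
  a - b <= a * ln a * (ln (ln a) - ln (ln b)).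
Proof.
move=> b_gt1 ba; have lnb_gt0 := ln_gt0 b_gt1.
have lnba : ln b <= ln a by rewrite ler_ln ?posrE //; lra.
have a_gt0 : 0 < a by lra.
have h1 : a - b <= a * (ln a - ln b) by apply: sub_le_mul_lnB; lra.
have h2 : ln a - ln b <= ln a * (ln (ln a) - ln (ln b)) by apply: sub_le_mul_lnB; lra.
by have := ler_wpM2l (ltW a_gt0) h2; rewrite mulrA; lra.
Qed.

(* [psi m] is a continuous antiderivative of [1 / (s * lam m s)], the
   potential of a variable drift argument with drift proportional to
   [s * lam m s]; [psi_drift] is the corresponding mean-value bound. *)
Definition lam (m s : R) : R := if s <= m then 1 else ln s.

Definition psi (m s : R) : R :=
  if s <= m then ln s else ln m + ln (ln s) - ln (ln m).

Section Threshold.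
Variable m : R.
Hypothesis lnm_ge1 : 1 <= ln m.

Lemma lam_gt0 s : 1 <= s -> 0 < lam m s.
Proof.
move=> s_ge1; rewrite /lam; case: (lerP s m) => // ms.
by apply: ln_gt0; have := ln_ge1_gt1 lnm_ge1; lra.
Qed.

Lemma psi_drift s s' : 1 <= s' -> s' <= s -> s - s' <= s * lam m s * (psi m s - psi m s').
Proof.
move=> s'_ge1 s's; have m_gt1 := ln_ge1_gt1 lnm_ge1.
rewrite /lam /psi; case: (lerP s m) => [sm | ms].
  by rewrite (le_trans s's sm) mulr1 sub_le_mul_lnB //; lra.
have lns_ge1 : 1 <= ln s by rewrite (le_trans lnm_ge1) // ler_ln ?posrE; lra.
case: (lerP s' m) => [s'm | ms'].
  have h1 := sub_le_mul_lnlnB m_gt1 (ltW ms).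
  have h2 : m - s' <= m * (ln m - ln s') by apply: sub_le_mul_lnB; lra.
  have h3 : 0 <= ln m - ln s' by rewrite subr_ge0 ler_ln ?posrE //; lra.
  have h4 : m * (ln m - ln s') <= s * ln s * (ln m - ln s') by rewrite ler_wpM2r //; nra.
  lra.
have := sub_le_mul_lnlnB (lt_trans m_gt1 ms') s's; lra.
Qed.

Lemma psi_ler s s' : 1 <= s' -> s' <= s -> psi m s' <= psi m s.
Proof.
move=> s'_ge1 s's; have s_ge1 := le_trans s'_ge1 s's.
have slam_gt0 : 0 < s * lam m s by rewrite mulr_gt0 ?lam_gt0 //; lra.
have drift := psi_drift s'_ge1 s's.
by rewrite -subr_ge0 -(pmulr_rge0 _ slam_gt0); lra.
Qed.

Lemma psi1 : psi m 1 = 0.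
Proof. by rewrite /psi ifT ?ln1 //; have := ln_ge1_gt1 lnm_ge1; lra. Qed.

Lemma psi_le_lnln s M : 1 <= s -> s <= M -> 1 <= ln M -> psi m s <= ln m + ln (ln M).
Proof.
move=> s_ge1 sM lnM_ge1; have m_gt1 := ln_ge1_gt1 lnm_ge1.
have lnlnM_ge0 : 0 <= ln (ln M) by apply: ln_ge0.
rewrite /psi; case: (lerP s m) => [sm | ms].
  have : ln s <= ln m by rewrite ler_ln ?posrE //; lra.
  lra.
have lnlnm_ge0 : 0 <= ln (ln m) by apply: ln_ge0.
have : ln (ln s) <= ln (ln M); last lra.
have lns_gt0 : 0 < ln s by apply: ln_gt0; lra.
by rewrite ler_ln ?posrE ?ler_ln ?posrE //; lra.
Qed.

End Threshold.
End VariableDriftPotential.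

Section Mutation.
Variables (R : realType) (n : nat).

Definition hvl_branch (t : tree n) (op : hvl_op) (l : 'I_n) (g : bool) : dist R (prog n) :=
  match op with
  | INS => dbind (unif R (iota 0 (tsize t))) (fun k =>
           dbind (unif R [:: true; false]) (fun side =>
           [:: (1, Some (ins t k g l side))]))
  | DEL => dbind (unif R (iota 0 (tsize t))) (fun k => [:: (1, del t k)])
  | SUB => dbind (unif R (iota 0 (tleaves t))) (fun j =>
           [:: (1, Some (sub_leaf t j l))])
  end.

Lemma hvl_SomeE (t : tree n) : hvl R (Some t) =
  dbind (unif R [:: INS; DEL; SUB]) (fun op =>
  dbind (unif R (enum 'I_n)) (fun l =>
  dbind (unif R [:: true; false]) (hvl_branch t op l))).
Proof. by []. Qed.

Lemma hvl_NoneE : hvl R None =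
  dbind (unif R [:: INS; DEL; SUB]) (fun _ =>
  dbind (unif R (enum 'I_n)) (fun l =>
  dbind (unif R [:: true; false]) (fun _ => [:: (1, Some (Leaf l))]))).
Proof. by []. Qed.

Local Hint Resolve dnonneg_bind dnonneg_unif dnonneg_ret : core.

Lemma dnonneg_hvl_branch t op l g : dnonneg (hvl_branch t op l g).
Proof. by rewrite /hvl_branch; case: op; auto. Qed.

Local Hint Resolve dnonneg_hvl_branch : core.

Lemma dnonneg_hvl (X : prog n) : dnonneg (hvl R X).
Proof. by case: X => [t|]; rewrite ?hvl_SomeE ?hvl_NoneE; auto. Qed.

Lemma dexp_hvl_const (X : prog n) c : (0 < n)%N -> dexp (hvl R X) (fun _ => c) = c.
Proof.
move=> n_gt0; case: X => [t|]; rewrite ?hvl_SomeE ?hvl_NoneE.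
all: apply: dexp_bind_unif_const => // op.
all: apply: dexp_bind_unif_const => [|l]; first by rewrite size_enum_ord.
all: apply: dexp_bind_unif_const => // g; rewrite ?dexp_ret //.
case: op; do !apply: dexp_bind_unif_const => [|?];
  by rewrite ?size_iota ?tsize_gt0 ?tleaves_gt0 ?dexp_ret.
Qed.

Lemma dexp_hvl_None_ge (G : prog n -> R) c : (0 < n)%N ->
  (forall l, c <= G (Some (Leaf l))) -> c <= dexp (hvl R None) G.
Proof.
move=> n_gt0 Gc; rewrite hvl_NoneE.
apply: ler_dexp_bind_unif => // op; apply: ler_dexp_bind_unif => [|l].
  by rewrite size_enum_ord.
by apply: ler_dexp_bind_unif => // g; rewrite dexp_ret.
Qed.

Lemma ins_root (t : tree n) g l : ins t 0 g l true = Node g t (Leaf l).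
Proof. by case: t. Qed.

Lemma dexp_hvl_ins_root_ge (t : tree n) (G : prog n -> R) : (forall o, 0 <= G o) ->
  \sum_(l < n) (12 * n * tsize t)%:R^-1 * G (Some (Node true t (Leaf l)))
    <= dexp (hvl R (Some t)) G.
Proof.
move=> G_ge0; set G_ins := fun l => G (Some (Node true t (Leaf l))).
have branch_ge l :
    (tsize t)%:R^-1 * (2%:R^-1 * G_ins l) <= dexp (hvl_branch t INS l true) G.
  rewrite -[in X in X%:R^-1](size_iota 0 (tsize t)).
  apply: ler_dexp_bind_unif_at; auto.
    by case: (tsize t) (tsize_gt0 t) => //= m _; left.
  apply: (ler_dexp_bind_unif_at (s := [:: true; false]) (or_introl _)); auto.
  by rewrite dexp_ret ins_root.
(* Choose INS, the literal l, g = AND, node 0 and the old tree on the left. *)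
have weight l : (12 * n * tsize t)%:R^-1 * G_ins l =
    3%:R^-1 * (n%:R^-1 * (2%:R^-1 * ((tsize t)%:R^-1 * (2%:R^-1 * G_ins l)))).
  by rewrite (_ : 12 * n * tsize t = 3 * n * 2 * tsize t * 2)%N ?natrM ?invfM; [ring | lia].
under eq_bigr do rewrite weight; rewrite -mulr_sumr hvl_SomeE.
apply: (ler_dexp_bind_unif_at (s := [:: INS; DEL; SUB]) (or_introl _)); auto.
rewrite dexp_bind_unif size_enum_ord big_enum; apply: ler_sum => l _.
rewrite ler_wpM2l ?invr_ge0 //.
by apply: (ler_dexp_bind_unif_at (s := [:: true; false]) (or_introl _)); auto.
Qed.

End Mutation.

Section DriftOnTruthSets.
Variables (R : realType) (n : nat).
Hypothesis n_gt1 : (1 < n)%N.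
Local Notation input := {ffun 'I_n -> bool}.

Lemma ln_natX k : ln ((n ^ k)%:R : R) = k%:R * ln n%:R.
Proof. by rewrite natrX lnXn ?ltr0n 1?ltnW // mulr_natl. Qed.

Lemma ln_nat_ge_half : 1 / 2 <= ln (n%:R : R).
Proof.
suff : ln (2 : R) <= ln n%:R by have := @ln2_ge_half R; lra.
by rewrite ler_ln ?posrE ?ltr0n ?(ler_nat R 2) // ltnW.
Qed.

Definition threshold : R := (n ^ 4)%:R.

Lemma ln_threshold_ge1 : 1 <= ln threshold.
Proof. by rewrite ln_natX; have := ln_nat_ge_half; lra. Qed.

Lemma card_le_mul_zeros_sum (S : {set input}) : (2 <= #|S|)%N ->
  #|S|%:R <= 4 * ln (n%:R : R) * (zeros_sum S)%:R.
Proof.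
move=> S_ge2; have := ln_nat_ge_half; have := card_leq_zeros_sum S.
rewrite -(ler_nat R) -natr1; have : (2 : R) <= #|S|%:R by rewrite (ler_nat R 2).
nra.
Qed.

Lemma card_mul_ln_le (S : {set input}) : (n ^ 4 < #|S|)%N ->
  #|S|%:R * ln (#|S|%:R : R) <= 4 * ln (n%:R : R) * (zeros_sum S)%:R.
Proof.
set s := #|S| => large.
have q_ge4 : (4 <= trunc_log n s)%N by rewrite trunc_log_max // ltnW.
have lo : (n ^ trunc_log n s <= s)%N by rewrite trunc_logP //; lia.
have hi := trunc_log_ltn s n_gt1.
case: (trunc_log n s) q_ge4 lo hi => // r; rewrite ltnS => r_ge3 lo hi.
have rs : (r * s <= 2 * zeros_sum S)%N.
  apply: card_mul_leq_zeros_sum => //; apply: leq_trans lo.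
  by rewrite expnSr mulnC leq_mul2l n_gt1 orbT.
have lns : ln (s%:R : R) < (r%:R + 2) * ln n%:R.
  rewrite -[r%:R + 2]natrD addn2 -ln_natX ltr_ln ?posrE ?ltr0n ?ltr_nat ?expn_gt0 //; lia.
have lnn := ln_nat_ge_half.
have r3 : (3 : R) <= r%:R by rewrite (ler_nat R 3).
have {}rs : (r%:R * s%:R : R) <= 2 * (zeros_sum S)%:R by rewrite -!natrM ler_nat.
have lnn2_ge0 : 0 <= 2 * ln (n%:R : R) by lra.
have := ler_wpM2l lnn2_ge0 rs.
have := ler_wpM2l (ler0n R s) (ltW lns).
have : 0 <= (s%:R : R) * ln n%:R * (r%:R - 2) by rewrite !mulr_ge0 //; lra.
lra.
Qed.

Lemma card_mul_lam_le (S : {set input}) : (2 <= #|S|)%N ->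
  #|S|%:R * lam threshold #|S|%:R <= 4 * ln (n%:R : R) * (zeros_sum S)%:R.
Proof.
move=> S_ge2; rewrite /lam; case: (lerP #|S|%:R threshold) => [_ | large].
  by rewrite mulr1 card_le_mul_zeros_sum.
by apply: card_mul_ln_le; rewrite -(ltr_nat R).
Qed.

Definition pot (s : nat) : R := psi threshold s%:R.

Lemma pot_sum_drift (S : {set input}) : all_true n \in S -> (2 <= #|S|)%N ->
  1 <= 4 * ln (n%:R : R) * \sum_(l < n) (pot #|S| - pot #|S :&: [set x : input | x l]|).
Proof.
move=> S1 S_ge2; set s := #|S|; set Sig := \sum_(l < n) _.
have slam_gt0 : 0 < s%:R * lam threshold s%:R.
  by rewrite mulr_gt0 ?lam_gt0 ?ln_threshold_ge1 ?ltr0n ?(ler_nat R 1) //; lia.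
have zerosE : ((zeros_sum S)%:R : R) = \sum_(l < n) (s%:R - #|S :&: [set x : input | x l]|%:R).
  rewrite zeros_sumE natr_sum; apply: eq_bigr => l _.
  by rewrite /s -(cardsID [set x : input | x l] S) natrD addrC addKr.
have drift : ((zeros_sum S)%:R : R) <= s%:R * lam threshold s%:R * Sig.
  rewrite zerosE /Sig mulr_sumr; apply: ler_sum => l _.
  apply: psi_drift; first exact: ln_threshold_ge1.
    rewrite (ler_nat R 1) card_gt0; apply/set0Pn; exists (all_true n).
    by rewrite !inE S1 ffunE.
  by rewrite ler_nat subset_leq_card // subsetIl.
have lnn := ln_nat_ge_half.
have := card_mul_lam_le S_ge2; rewrite -/s => slam_le.
have lnn4_ge0 : 0 <= 4 * ln (n%:R : R) by lra.
have drift4 := ler_wpM2l lnn4_ge0 drift.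
by rewrite -(ler_pM2l slam_gt0) mulr1; lra.
Qed.

Lemma pot_top_le : pot (2 ^ n) <= 5 * ln (n%:R : R).
Proof.
have lnn := ln_nat_ge_half.
have ln2_le1 := @ln2_le1 R; have ln2_ge := @ln2_ge_half R.
have n_ge2 : (2 : R) <= n%:R by rewrite (ler_nat R 2).
have lnM : ln ((2 ^ n)%:R : R) = n%:R * ln 2 by rewrite natrX lnXn // mulr_natl.
have lnM_ge1 : 1 <= ln ((2 ^ n)%:R : R) by rewrite lnM; nra.
have lnlnM : ln (ln ((2 ^ n)%:R : R)) <= ln n%:R.
  rewrite lnM ler_ln ?posrE ?mulr_gt0 ?ltr0n 1?ltnW //; nra.
have := @psi_le_lnln R threshold ln_threshold_ge1 (2 ^ n)%:R (2 ^ n)%:R.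
rewrite /pot /threshold ln_natX (ler_nat R 1) expn_gt0 => /(_ isT (lexx _) lnM_ge1).
lra.
Qed.

End DriftOnTruthSets.

Section RLSPotential.
Variables (R : realType) (n ell : nat).
Hypotheses (n_gt1 : (1 < n)%N) (n_le_ell : (n <= ell)%N).

Definition scale : R := 96 * n%:R * ell%:R * ln n%:R.

Definition fit_pot (f : nat) : R :=
  if (f < 2 ^ n)%N then scale * pot R n f.+1 else 1 + scale * pot R n (2 ^ n).

Definition potential (X : prog n) : R := fit_pot (fitness X).

Definition accept (X X' : prog n) : prog n :=
  if (LeafCount X' <= ell)%N && (fitness X' <= fitness X)%N then X' else X.

Definition notfull_nonopt (X : prog n) : R :=
  ((fitness X != 0)%N && (LeafCount X < ell)%N)%:R.

Lemma scale_ge0 : 0 <= scale.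
Proof. by rewrite /scale !mulr_ge0 ?ln_ge0 ?(ler_nat R 1) // ltnW. Qed.

Lemma pot_ler s s' : (1 <= s')%N -> (s' <= s)%N -> pot R n s' <= pot R n s.
Proof.
by move=> s'_ge1 s's; apply: psi_ler; rewrite ?ln_threshold_ge1 ?(ler_nat R 1) ?ler_nat.
Qed.

Lemma pot_ge0 s : (1 <= s)%N -> 0 <= pot R n s.
Proof.
move=> s_ge1; apply: le_trans (pot_ler (leqnn 1) s_ge1).
by rewrite /pot mulr1n psi1 // ln_threshold_ge1.
Qed.

Lemma fit_pot_ler f f' : (f' <= f)%N -> fit_pot f' <= fit_pot f.
Proof.
move=> f'f; rewrite /fit_pot; have := scale_ge0.
case: ltnP => f'_lt; case: ltnP => f_lt // scale_ge0; try lia.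
  by rewrite ler_wpM2l ?pot_ler.
by apply: ler_wpDl; rewrite ?ler_wpM2l ?pot_ler.
Qed.

Lemma fit_pot_ge0 f : 0 <= fit_pot f.
Proof.
apply: le_trans (fit_pot_ler (leq0n f)); rewrite /fit_pot expn_gt0 /=.
by rewrite mulr_ge0 ?scale_ge0 ?pot_ge0.
Qed.

Lemma fit_pot_lt_top f : (f < 2 ^ n)%N -> fit_pot f + 1 <= fit_pot (2 ^ n).
Proof.
move=> f_lt; rewrite /fit_pot f_lt ltnn addrC lerD2l.
by rewrite ler_wpM2l ?scale_ge0 ?pot_ler.
Qed.

Lemma potential_Some (t : tree n) : potential (Some t) = scale * pot R n #|truth_set t|.
Proof. by rewrite /potential /fit_pot fitness_lt card_truth_set. Qed.

Lemma potential_accept_le (X X' : prog n) : potential (accept X X') <= potential X.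
Proof. by rewrite /accept; case: ifP => // /andP[_ /fit_pot_ler]. Qed.

Lemma drift_empty :
  1 <= dexp (hvl R None) (fun X' => potential None - potential (accept None X')).
Proof.
apply: dexp_hvl_None_ge => [|l]; first lia.
have fit_le : (fitness (Some (Leaf l)) <= fitness (None : prog n))%N := ltnW (fitness_lt _).
rewrite /accept fit_le (_ : LeafCount _ = 1%N) //= andbT (leq_trans (ltnW n_gt1)) //.
by have := fit_pot_lt_top (fitness_lt (Leaf l)); rewrite /potential; lra.
Qed.

Lemma drift_nonempty (t : tree n) : fitness (Some t) != 0%N -> (tleaves t < ell)%N ->
  1 <= dexp (hvl R (Some t)) (fun X' => potential (Some t) - potential (accept (Some t) X')).
Proof.
move=> nonopt notfull.
have drop_ge0 X' : 0 <= potential (Some t) - potential (accept (Some t) X').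
  by rewrite subr_ge0 potential_accept_le.
apply: le_trans (dexp_hvl_ins_root_ge t drop_ge0).
have acceptE l : accept (Some t) (Some (Node true t (Leaf l))) = Some (Node true t (Leaf l)).
  rewrite /accept [LeafCount _]/= addn1 notfull andTb.
  by rewrite -ltnS -!card_truth_set truth_set_and_leaf subset_leq_card ?subsetIl.
under eq_bigr do rewrite acceptE !potential_Some truth_set_and_leaf -mulrBr.
have S_ge2 : (2 <= #|truth_set t|)%N by rewrite card_truth_set ltnS lt0n.
have S1 : all_true n \in truth_set t by rewrite inE teval_all_true.
have := pot_sum_drift R n_gt1 S1 S_ge2; set Sig := \sum_(l < n) _ => drift.
rewrite -mulr_sumr -mulr_sumr -/Sig.
have size_le : (12 * n * tsize t <= 24 * n * ell)%N by have := tsize_tleaves t; nia.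
have size_gt0 : (0 < 12 * n * tsize t)%N by rewrite !muln_gt0 tsize_gt0 andbT; lia.
rewrite -(ler_pM2l (_ : 0 < (12 * n * tsize t)%:R)) ?ltr0n // mulr1 mulVKf ?pnatr_eq0 -?lt0n //.
have := ler_wpM2l (ler0n R (24 * n * ell)) drift; rewrite -(ler_nat R) in size_le.
by rewrite /scale !natrM in size_le *; lra.
Qed.

Lemma potential_drift (X : prog n) :
  notfull_nonopt X <= dexp (hvl R X) (fun X' => potential X - potential (accept X X')).
Proof.
rewrite /notfull_nonopt; case: (boolP (_ && _)) => [|_]; last first.
  by apply: dexp_ge0 => [|X']; rewrite ?dnonneg_hvl ?subr_ge0 ?potential_accept_le.
by case: X => [t /andP[]|_]; [exact: drift_nonempty | exact: drift_empty].
Qed.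

Lemma dexp_rls_step_le (X : prog n) :
  dexp (rls_step R ell X) potential <= potential X - notfull_nonopt X.
Proof.
have -> : dexp (rls_step R ell X) potential = dexp (hvl R X) (fun X' => potential (accept X X')).
  by rewrite /dexp /rls_step big_map.
have := potential_drift X; rewrite dexpB dexp_hvl_const 1?ltnW //; lra.
Qed.

Lemma dnonneg_rls_dist t : dnonneg (rls_dist R n ell t).
Proof.
elim: t => [|t IH]; first exact: dnonneg_ret.
apply: dnonneg_bind => // X; have := dnonneg_hvl R X.
by rewrite /dnonneg /rls_step; elim: (hvl R X) => //= p d IHd /andP[-> /IHd].
Qed.

Lemma p_notfull_nonoptE t :
  p_notfull_nonopt R n ell t = dexp (rls_dist R n ell t) notfull_nonopt.
Proof.
rewrite /p_notfull_nonopt /dexp big_mkcond; apply: eq_bigr => p _.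
by rewrite /notfull_nonopt; case: (_ && _); rewrite ?mulr1 ?mulr0.
Qed.

Lemma ET0_partial_add_potential_le t :
  ET0_partial R n ell t + dexp (rls_dist R n ell t) potential <= potential None.
Proof.
elim: t => [|t IH]; first by rewrite /ET0_partial big_ord0 add0r dexp_ret.
rewrite /ET0_partial big_ord_recr -/(ET0_partial R n ell t) p_notfull_nonoptE /=.
have : dexp (dbind (rls_dist R n ell t) (rls_step R ell)) potential
    <= dexp (rls_dist R n ell t) (fun X => potential X - notfull_nonopt X).
  by rewrite dexp_bind; apply: ler_dexp (dnonneg_rls_dist t) dexp_rls_step_le.
by rewrite dexpB; lra.
Qed.

Lemma ET0_partial_le_potential_None t : ET0_partial R n ell t <= potential None.
Proof.
have := ET0_partial_add_potential_le t.
have : 0 <= dexp (rls_dist R n ell t) potential.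
  by apply: dexp_ge0 (dnonneg_rls_dist t) _ => X; apply: fit_pot_ge0.
lra.
Qed.

Lemma potential_None_le : potential None <= 481 * ell%:R * n%:R * ln (n%:R : R) ^+ 2.
Proof.
rewrite /potential /fit_pot /= ltnn /scale.
have lnn := ln_nat_ge_half R n_gt1.
have n_ge2 : (2 : R) <= n%:R by rewrite (ler_nat R 2).
have ell_ge_n : (n%:R : R) <= ell%:R by rewrite ler_nat.
have coef_ge0 : 0 <= 96 * n%:R * ell%:R * ln (n%:R : R) by rewrite !mulr_ge0 //; lra.
have := ler_wpM2l coef_ge0 (pot_top_le R n_gt1).
have : 1 <= n%:R * ell%:R * ln (n%:R : R) ^+ 2.
  have : 4 <= (n%:R : R) * ell%:R by nra.
  by rewrite expr2; nra.
by rewrite expr2; lra.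
Qed.

End RLSPotential.

Theorem lemma5 (R : realType) :
  exists (C : R) (N : nat), forall n ell : nat, (N <= n)%N -> (n <= ell)%N ->
    forall t : nat,
      ET0_partial R n ell t <= C * ell%:R * n%:R * (ln (n%:R : R)) ^+ 2.
Proof.
exists 481, 2%N => n ell n_ge2 n_le_ell t.
apply: le_trans (ET0_partial_le_potential_None R n_ge2 n_le_ell t) _.
exact: potential_None_le.
Qed.
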